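(* Let $m\ge3$ be odd, $n\ge 0$ an integer, $h=8(m-2)n+3(m-4)^2$, and $\bm d=(d_1,d_2,d_3)\in\mathbb{N}^3$. Let $p$ be an odd prime with $p\mid(m-2)$. Then \[ b_p(h,\lambda_{\bm d},0)=\begin{cases} p^{\mathrm{ord}_p(m-2)+\min_j\{\mathrm{ord}_p(d_j)\}} & \text{if } n\in\gcd(d_1,d_2,d_3)\mathbb{Z}_p,\\ 0&\text{otherwise.}\end{cases} \]
   Context: $V$ is the ternary quadratic space over $\mathbb{Q}$ with basis $e_1,e_2,e_3$, $B(e_i,e_j)=4(m-2)^2\delta_{ij}$, $Q(x)=B(x,x)$; $L^{\bm d}=\mathbb{Z}d_1e_1+\mathbb{Z}d_2e_2+\mathbb{Z}d_3e_3$, $\nu=\frac{4-m}{2(m-2)}(e_1+e_2+e_3)$, $X^{\bm d}=L^{\bm d}+\nu$, and $\lambda_{\bm d}$ is the characteristic function of $X^{\bm d}$. For $z\in\mathbb{Q}_p$, $\bm e_p(z)=e^{-2\pi i y}$ where $y\in\bigcup_{t\ge1}p^{-t}\mathbb{Z}$ satisfies $z-y\in\mathbb{Z}_p$. With Haar measures $dv$ on $L^{\bm d}_p=L^{\bm d}\otimes\mathbb{Z}_p$ and $d\sigma$ on $\mathbb{Q}_p$ normalized so that $L^{\bm d}_p$ and $\mathbb{Z}_p$ have volume $1$, the local density is \[ b_p(h,\lambda_{\bm d},0)=\int_{\mathbb{Q}_p}\int_{L^{\bm d}_p}\bm e_p\big(\sigma(Q(v+\nu)-h)\big)\,dv\,d\sigma.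 \] *)

From mathcomp Require Import all_boot all_algebra.
From mathcomp Require Import all_classical all_reals all_analysis.
From mathcomp.real_closed Require Import complex.

Set Implicit Arguments.
Unset Strict Implicit.
Unset Printing Implicit Defensive.

Import GRing.Theory Num.Theory numFieldNormedType.Exports.
Local Open Scope ring_scope.
Local Open Scope classical_set_scope.

(* The p-adic additive character restricted to rationals.                    *)
(* For z in Q, write z = u / (p^k * w) with p coprime to w.  Then            *)
(* y := ((u * w') mod p^k) / p^k, where w * w' = 1 mod p^k, lies in Z[1/p]   *)
(* (indeed in p^-k Z) and satisfies z - y in Z_p.  Any two such y differ by  *)
(* an integer, so e_p(z) = exp(-2 pi i y) is well defined.                   *)
Definition ep_frac (p : nat) (z : rat) : rat :=
  let u := numq z in
  let den := `|denq z|%N in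
  let k := logn p den in
  let w := (den %/ p ^ k)%N in
  let w' := (egcdn w (p ^ k)).1 in
  ((intdiv.modz (u * w'%:Z) (p ^ k)%:Z)%:~R) / (p ^ k)%:R.

Definition ep (R : realType) (p : nat) (z : rat) : R[i] :=
  let y : R := ratr (ep_frac p z) in
  (cos (2 * pi * y) -i* sin (2 * pi * y))%C.

(* Quadratic form Q(x) = B(x,x), B(e_i,e_j) = 4(m-2)^2 delta_ij, in the      *)
(* coordinates of the basis e_1, e_2, e_3.                                  *)
Definition Qform (m : nat) (y1 y2 y3 : rat) : rat :=
  4 * (m%:R - 2) ^+ 2 * (y1 ^+ 2 + y2 ^+ 2 + y3 ^+ 2).

(* Common coordinate of nu = (4-m)/(2(m-2)) (e_1 + e_2 + e_3). *)
Definition nu_coord (m : nat) : rat := (4 - m%:R) / (2 * (m%:R - 2)).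

Definition hval (m n : nat) : rat :=
  8 * (m%:R - 2) * n%:R + 3 * (m%:R - 4) ^+ 2.

(* Q(v + nu) - h for v = x1 d1 e1 + x2 d2 e2 + x3 d3 e3. *)
Definition Fval (m n d1 d2 d3 : nat) (x1 x2 x3 : nat) : rat :=
  Qform m (d1%:R * x1%:R + nu_coord m) (d2%:R * x2%:R + nu_coord m)
          (d3%:R * x3%:R + nu_coord m) - hval m n.

(* Truncated local density:                                                  *)
(*   I_t = \int_{p^{-t} Z_p} \int_{L^d_p} e_p(sigma (Q(v+nu) - h)) dv dsigma. *)
(* Since Q(v+nu) - h is p-integral on L^d_p, the integrand is constant on    *)
(* the cosets (a/p^t + Z_p) x (x + p^t Z_p^3), each of measure p^{-3t}       *)
(* (dv normalised so that L^d_p = Z_p d1 e1 + Z_p d2 e2 + Z_p d3 e3 has      *)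
(* volume 1, dsigma so that Z_p has volume 1).                               *)
Definition trunc_density (R : realType) (p m n d1 d2 d3 t : nat) : R[i] :=
  \sum_(a < p ^ t) \sum_(x1 < p ^ t) \sum_(x2 < p ^ t) \sum_(x3 < p ^ t)
     ((((p ^ (3 * t))%:R : R)^-1)%:C
       * ep R p ((a%:R / (p ^ t)%:R) * Fval m n d1 d2 d3 x1 x2 x3))%C.

(* b_p(h, lambda_d, 0) = lim_{t -> oo} I_t ;  "b_p = c" is expressed as the  *)
(* convergence of I_t to c in C (real and imaginary parts).                  *)
Definition density_is (R : realType) (p m n d1 d2 d3 : nat) (c : R[i]) : Prop :=
  (fun t => @complex.Re R (trunc_density R p m n d1 d2 d3 t)) @ \oo --> (@complex.Re R c : R) /\
  (fun t => @complex.Im R (trunc_density R p m n d1 d2 d3 t)) @ \oo --> (@complex.Im R c : R).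

(* Proof: on the lattice, Q(v + nu) - h = 4(m-2) G(x) with
   G(x) = q(d1 x1) + q(d2 x2) + q(d3 x3) - 2n and q(y) = y((m-2)y - (m-4)), so the
   sigma-integral over p^-t Z_p is, by orthogonality of the characters
   a |-> e(a y / p^t), p^-2t times the number of x mod p^t with
   p^(t-k) | G(x), k = ord_p(m-2).  As p | m-2 is odd, (m-2)y - (m-4) is a
   p-adic unit, and for D = u p^e (p not dividing u) the map
   x |-> q(D x) / p^e = u x ((m-2) D x - (m-4)) is injective, hence bijective,
   modulo every power of p.  Solving for the coordinate of least valuation e
   then gives p^(t-s+e) solutions for each choice of the other two coordinates
   when p^e | n, and none otherwise; so the truncated integrals are constant,
   equal to p^(k+e) or 0, as soon as t >= k + e. *)

From mathcomp Require Import all_boot all_algebra.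
From mathcomp Require Import all_classical all_reals all_analysis.
From mathcomp.real_closed Require Import complex.
From mathcomp Require Import zify ring lra.
Import GRing.Theory Num.Theory numFieldNormedType.Exports.

Local Open Scope ring_scope.

Lemma eq_of_dvdz_subn (P x y : nat) :
  (x < P)%N -> (y < P)%N -> (P%:Z %| x%:Z - y%:Z)%Z -> x = y.
Proof. by move=> xP yP; rewrite -eqz_mod_dvd !modz_nat !modn_small // => /eqP[]. Qed.

Lemma sum_periodic_nat (g : nat -> nat) a b : (forall x, g (x + b)%N = g x) ->
  (\sum_(0 <= x < a * b) g x = a * \sum_(0 <= x < b) g x)%N.
Proof.
move=> gP; have gPn k x : g (x + k * b)%N = g x.
  by elim: k x => [|k IH] x; rewrite ?mul0n ?addn0 // mulSn addnA IH gP.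
elim: a => [|a IH]; first by rewrite !mul0n big_geq.
rewrite mulSnr (@big_cat_nat _ _ _ (a * b)) //= ?leq_addr // IH.
rewrite -{1}[(a * b)%N]add0n big_addn addKn mulSnr; congr (_ + _)%N.
by apply: eq_bigr => i _; rewrite gPn.
Qed.

Lemma count_dvdz_injmod (N : nat) (f : nat -> int) (c : int) : (0 < N)%N ->
  (forall x y, (x < N)%N -> (y < N)%N -> (N%:Z %| f x - f y)%Z -> x = y) ->
  (\sum_(x < N) ((N%:Z %| (f x + c)%R)%Z : nat))%N = 1%N.
Proof.
move=> N_gt0 f_inj.
have N_neq0 : N%:Z != 0 by rewrite eqz_nat -lt0n.
have modN_lt (z : int) : (`|(z %% N)%Z|%N < N)%N.
  by rewrite -ltz_nat gez0_abs ?modz_ge0 ?ltz_pmod.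
have modN_eq (z z' : int) :
    (`|(z %% N)%Z|%N == `|(z' %% N)%Z|%N) = (N%:Z %| z - z')%Z.
  by rewrite -eqz_mod_dvd -eqz_nat !gez0_abs ?modz_ge0.
pose h (x : 'I_N) : 'I_N := Ordinal (modN_lt (f x)).
have h_inj : injective h.
  move=> x y /(congr1 val)/eqP; rewrite modN_eq.
  by move/(f_inj _ _ (ltn_ord x) (ltn_ord y))/val_inj.
have /codomP[x0 hx0] : Ordinal (modN_lt (- c)) \in codom h by exact: inj_card_onto.
have hitE (x : 'I_N) : (N%:Z %| f x + c)%Z = (x == x0).
  rewrite -[c]opprK -modN_eq -[X in X == _]/(val (h x)).
  by rewrite -[X in _ == X]/(val (Ordinal (modN_lt (- c)))) hx0 val_eqE (inj_eq h_inj).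
rewrite (bigD1 x0) //= big1 ?hitE ?eqxx ?addn0 // => x /negbTE.
by rewrite hitE => ->.
Qed.

Definition count_dvd3 (M N : nat) (g : nat -> nat -> nat -> int) : nat :=
  (\sum_(x1 < M) \sum_(x2 < M) \sum_(x3 < M) ((N%:Z %| g x1 x2 x3)%Z : nat))%N.

Lemma eq_count_dvd3 M N N' g g' :
  (forall x1 x2 x3, (N%:Z %| g x1 x2 x3)%Z = (N'%:Z %| g' x1 x2 x3)%Z) ->
  count_dvd3 M N g = count_dvd3 M N' g'.
Proof.
move=> eq_g; apply: eq_bigr => x1 _; apply: eq_bigr => x2 _.
by apply: eq_bigr => x3 _; rewrite eq_g.
Qed.

Lemma count_dvd3_swap12 M N g :
  count_dvd3 M N g = count_dvd3 M N (fun x1 x2 x3 => g x2 x1 x3).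
Proof. by rewrite /count_dvd3 exchange_big. Qed.

Lemma count_dvd3_swap23 M N g :
  count_dvd3 M N g = count_dvd3 M N (fun x1 x2 x3 => g x1 x3 x2).
Proof. by apply: eq_bigr => x1 _; rewrite exchange_big. Qed.

Section QuadraticCongruence.

Variables (p : nat) (A : int).
Hypotheses (p_prime : prime p) (p_odd : odd p) (p_dvdA : (p%:Z %| A)%Z).

Definition qpoly (y : int) : int := y * (A * y - (A - 2)).

Lemma coprimez_qpoly_factor (z : int) : coprimez p (A * z - (A - 2)).
Proof.
rewrite coprimezE prime_coprime //; apply: contraTN p_odd => p_dvd.
have : (p%:Z %| 2)%Z.
  have -> : 2 = A * z - (A - 2) - A * (z - 1) :> int by ring.
  by rewrite rpredB ?dvdz_mulr // dvdzE.
by rewrite dvdzE -coprimen2 prime_coprime // => ->.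
Qed.

Lemma dvdz_unit_quad_sub (u D x y : int) r : coprimez p u ->
  ((p ^ r)%N%:Z %| u * x * (A * D * x - (A - 2)) - u * y * (A * D * y - (A - 2)))%Z
  = ((p ^ r)%N%:Z %| x - y)%Z.
Proof.
move=> u_cop.
have -> : u * x * (A * D * x - (A - 2)) - u * y * (A * D * y - (A - 2))
          = u * ((x - y) * (A * (D * (x + y)) - (A - 2))) by ring.
rewrite Gauss_dvdzr ?Gauss_dvdzl // coprimezE /= coprimeXl //.
exact: coprimez_qpoly_factor.
Qed.

Lemma dvdz_qpoly_mul (D : nat) (x : int) e : (0 < D)%N -> (e <= logn p D)%N ->
  ((p ^ e)%N%:Z %| qpoly (D%:Z * x))%Z.
Proof.
by move=> D_gt0 eD; rewrite !dvdz_mulr // dvdzE /= pfactor_dvdn.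
Qed.

(* Writing D = u p^e with p coprime to u, qpoly (D x) = p^e f(x) where
   f(x) = u x (A D x - (A - 2)) is a bijection modulo every power of p. *)
Lemma count_qpoly_dvd (D s t : nat) (c : int) :
  (0 < D)%N -> ((p ^ logn p D)%N%:Z %| c)%Z -> (logn p D <= s)%N -> (s <= t)%N ->
  (\sum_(x < p ^ t) (((p ^ s)%N%:Z %| (qpoly (D%:Z * x%:Z) + c)%R)%Z : nat))%N
  = (p ^ (t - s + logn p D))%N.
Proof.
move=> D_gt0 /dvdzP[c' ->] eD st.
have [u u_cop DE] := pfactor_coprime p_prime D_gt0.
move: eD DE; set e := logn p D => eD DE.
pose f (x : nat) : int := u%:Z * x%:Z * (A * D%:Z * x%:Z - (A - 2)).
have pexp_gt0 k : (0 < p ^ k)%N by rewrite expn_gt0 prime_gt0.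
have reduceE (x : nat) :
    ((p ^ s)%N%:Z %| qpoly (D%:Z * x%:Z) + c' * (p ^ e)%N%:Z)%Z
    = ((p ^ (s - e))%N%:Z %| f x + c')%Z.
  have -> : qpoly (D%:Z * x%:Z) + c' * (p ^ e)%N%:Z = (p ^ e)%N%:Z * (f x + c').
    by rewrite /qpoly /f {1}DE PoszM; ring.
  rewrite -{1}(subnKC eD) expnD PoszM dvdz_mul2l //.
  by have := pexp_gt0 e; lia.
under eq_bigr do rewrite reduceE.
rewrite -(big_mkord xpredT (fun x => ((p ^ (s - e))%N%:Z %| f x + c')%Z : nat)).
have -> : (p ^ t = p ^ (t - (s - e)) * p ^ (s - e))%N by rewrite -expnD subnK //; lia.
rewrite sum_periodic_nat => [|x]; last first.
  have -> : f (x + p ^ (s - e))%N + c' = f x + c' +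
      (p ^ (s - e))%N%:Z * (u%:Z * (A * D%:Z * (2 * x%:Z + (p ^ (s - e))%N%:Z) - (A - 2))).
    by rewrite /f PoszD; ring.
  by rewrite rpredDr // dvdz_mulr.
rewrite big_mkord count_dvdz_injmod // => [|x y xP yP]; last first.
  by rewrite dvdz_unit_quad_sub ?coprimezE //; apply: eq_of_dvdz_subn.
by rewrite muln1; congr (p ^ _)%N; lia.
Qed.

Definition qform3 (n d1 d2 d3 x1 x2 x3 : nat) : int :=
  qpoly (d1%:Z * x1%:Z) + qpoly (d2%:Z * x2%:Z) + qpoly (d3%:Z * x3%:Z) - 2 * n%:Z.

Lemma count_qform3_swap12 M N n d1 d2 d3 :
  count_dvd3 M N (qform3 n d1 d2 d3) = count_dvd3 M N (qform3 n d2 d1 d3).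
Proof.
rewrite count_dvd3_swap12; apply: eq_count_dvd3 => x1 x2 x3.
by rewrite /qform3 (addrC (qpoly _) (qpoly (d1%:Z * _))).
Qed.

Lemma count_qform3_swap23 M N n d1 d2 d3 :
  count_dvd3 M N (qform3 n d1 d2 d3) = count_dvd3 M N (qform3 n d1 d3 d2).
Proof.
rewrite count_dvd3_swap23; apply: eq_count_dvd3 => x1 x2 x3.
by rewrite /qform3 -!addrA (addrCA (qpoly (d3%:Z * _))).
Qed.

Lemma count_qform3_min_last n d1 d2 d3 s t :
  (0 < d1)%N -> (0 < d2)%N -> (0 < d3)%N ->
  (logn p d3 <= logn p d1)%N -> (logn p d3 <= logn p d2)%N ->
  (p ^ logn p d3 %| n)%N -> (logn p d3 <= s)%N -> (s <= t)%N ->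
  count_dvd3 (p ^ t) (p ^ s) (qform3 n d1 d2 d3)
  = (p ^ t * (p ^ t * p ^ (t - s + logn p d3)))%N.
Proof.
move=> d1_gt0 d2_gt0 d3_gt0 le31 le32 n_dvd le3s st.
rewrite /count_dvd3 (eq_bigr (fun=> p ^ t * p ^ (t - s + logn p d3)))%N => [|x1 _].
  by rewrite sum_nat_const card_ord.
rewrite (eq_bigr (fun=> p ^ (t - s + logn p d3)))%N => [|x2 _].
  by rewrite sum_nat_const card_ord.
pose c := qpoly (d1%:Z * x1%:Z) + qpoly (d2%:Z * x2%:Z) - 2 * n%:Z.
rewrite -(count_qpoly_dvd d3 s t c) //; last first.
  by rewrite rpredB ?rpredD ?dvdz_qpoly_mul ?dvdz_mull ?dvdzE.
apply: eq_bigr => x3 _.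
by have -> : qform3 n d1 d2 d3 x1 x2 x3 = qpoly (d3%:Z * x3%:Z) + c by rewrite /qform3 /c; ring.
Qed.

Lemma count_qform3_eq0 n d1 d2 d3 s t e :
  (0 < d1)%N -> (0 < d2)%N -> (0 < d3)%N ->
  (e <= logn p d1)%N -> (e <= logn p d2)%N -> (e <= logn p d3)%N -> (e <= s)%N ->
  ~~ (p ^ e %| n)%N ->
  count_dvd3 (p ^ t) (p ^ s) (qform3 n d1 d2 d3) = 0%N.
Proof.
move=> d1_gt0 d2_gt0 d3_gt0 le1 le2 le3 les n_ndvd.
rewrite /count_dvd3 big1 // => x1 _; rewrite big1 // => x2 _; rewrite big1 // => x3 _.
apply/eqP; rewrite eqb0; apply: contra n_ndvd => G_dvd.
have : ((p ^ e)%N%:Z %| 2 * n%:Z)%Z.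
  have -> : 2 * n%:Z = qpoly (d1%:Z * x1%:Z) + qpoly (d2%:Z * x2%:Z)
                       + qpoly (d3%:Z * x3%:Z) - qform3 n d1 d2 d3 x1 x2 x3.
    by rewrite /qform3; ring.
  apply: rpredB; first by rewrite !rpredD ?dvdz_qpoly_mul.
  by apply: dvdz_trans G_dvd; rewrite dvdzE /= dvdn_exp2l.
by rewrite -PoszM dvdzE /= Gauss_dvdr // coprimeXl // coprimen2.
Qed.

Lemma count_qform3 n d1 d2 d3 s t :
  (0 < d1)%N -> (0 < d2)%N -> (0 < d3)%N ->
  (minn (logn p d1) (minn (logn p d2) (logn p d3)) <= s)%N -> (s <= t)%N ->
  count_dvd3 (p ^ t) (p ^ s) (qform3 n d1 d2 d3)
  = if (p ^ minn (logn p d1) (minn (logn p d2) (logn p d3)) %| n)%N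
    then (p ^ t * (p ^ t * p ^ (t - s + minn (logn p d1) (minn (logn p d2) (logn p d3)))))%N
    else 0%N.
Proof.
set e := minn _ _ => d1_gt0 d2_gt0 d3_gt0 les st.
have [le1 le2 le3] : [/\ e <= logn p d1, e <= logn p d2 & e <= logn p d3]%N.
  by rewrite /e; split; lia.
case: ifP => [n_dvd|/negbT n_ndvd]; last exact: (@count_qform3_eq0 n d1 d2 d3 s t e).
have [e1|[e2|e3]] : e = logn p d1 \/ e = logn p d2 \/ e = logn p d3 by rewrite /e; lia.
- rewrite e1 in le2 le3 n_dvd les *.
  by rewrite count_qform3_swap12 count_qform3_swap23 count_qform3_min_last.
- rewrite e2 in le1 le3 n_dvd les *.
  by rewrite count_qform3_swap23 count_qform3_min_last.
- rewrite e3 in le1 le2 n_dvd les *.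
  by rewrite count_qform3_min_last.
Qed.

End QuadraticCongruence.

Section AdditiveCharacter.

Context {R : realType}.
Local Open Scope complex_scope.

Definition echar (y : R) : R[i] := cos (2 * pi * y) -i* sin (2 * pi * y).

Lemma echarD x y : echar (x + y) = echar x * echar y.
Proof.
rewrite /echar mulrDr cosD sinD -[(_ -i* _) * (_ -i* _)]/(_ +i* _).
by congr (_ +i* _); ring.
Qed.

Lemma echar0 : echar 0 = 1.
Proof. by rewrite /echar mulr0 cos0 sin0 oppr0. Qed.

Lemma echarMn x k : echar (x *+ k) = echar x ^+ k.
Proof.
elim: k => [|k IH]; first by rewrite mulr0n echar0 expr0.
by rewrite mulrS echarD IH exprS.
Qed.

Lemma echar_addn y (k : nat) : echar (y + k%:R) = echar y.
Proof.
rewrite /echar; have -> : 2 * pi * (y + k%:R) = 2 * pi * y + (pi *+ 2) *+ k :> R.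
  by rewrite -[(pi *+ 2) *+ k]mulr_natr -[pi *+ 2]mulr_natr; ring.
by rewrite (periodicn (@cosD2pi R)) (periodicn (@sinD2pi R)).
Qed.

Lemma echar_addz y (K : int) : echar (y + K%:~R) = echar y.
Proof.
case: K => k; first exact: echar_addn.
by rewrite NegzE intrN -[in RHS](subrK k.+1%:R y) echar_addn.
Qed.

Lemma echar_int (K : int) : echar K%:~R = 1.
Proof. by rewrite -[K%:~R]add0r echar_addz echar0. Qed.

(* cos (2 pi x) = 1 would force sin (pi x) = 0, impossible for 0 < pi x < pi. *)
Lemma cos2pi_neq1 (x : R) : 0 < x < 1 -> cos (2 * pi * x) != 1.
Proof.
move=> /andP[x_gt0 x_lt1]; apply/eqP.
rewrite (_ : 2 * pi * x = (pi * x) *+ 2); last by rewrite -mulr_natl; ring.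
rewrite cos_mulr2n => cos2.
have : sin (pi * x) ^+ 2 = 0 by rewrite sin2cos2; lra.
move/eqP; rewrite expf_eq0 /= => /eqP sin0.
have : 0 < sin (pi * x).
  by apply: sin_gt0_pi; rewrite mulr_gt0 ?pi_gt0 //= -[X in _ < X]mulr1 ltr_pM2l ?pi_gt0.
by rewrite sin0; lra.
Qed.

Lemma echar_frac_neq1 (F : int) (N : nat) : (0 < N)%N -> ~~ (N%:Z %| F)%Z ->
  echar (F%:~R / N%:R) != 1.
Proof.
move=> N_gt0 F_ndvd.
have N_neq0 : N%:Z != 0 by rewrite eqz_nat -lt0n.
have NR_gt0 : (0 : R) < N%:R by rewrite ltr0n.
have r_bounds : 0 < ((F %% N)%Z%:~R / N%:R : R) < 1.
  have r_gt0 : 0 < (F %% N)%Z.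
    by rewrite lt0r modz_ge0 // andbT; apply: contra F_ndvd => /eqP/dvdz_mod0P.
  rewrite divr_gt0 ?ltr0z //= ltr_pdivrMr // mul1r -[N%:R]/((N%:Z)%:~R : R) ltr_int.
  by rewrite ltz_pmod // ltz_nat.
rewrite {1}(divz_eq F N) intrD intrM addrC mulrDl -mulrA mulfV ?mulr1 ?lt0r_neq0 //.
rewrite echar_addz; apply: contraNneq (cos2pi_neq1 _ r_bounds).
by move/(congr1 (@complex.Re R)) => /= ->.
Qed.

Lemma sum_echar_frac (F : int) (N : nat) : (0 < N)%N ->
  \sum_(a < N) echar (a%:R / N%:R * F%:~R) = if (N%:Z %| F)%Z then N%:R else 0.
Proof.
move=> N_gt0; have NR_neq0 : (N%:R : R) != 0 by rewrite pnatr_eq0 -lt0n.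
rewrite (eq_bigr (fun a : 'I_N => echar (F%:~R / N%:R) ^+ a)) => [|a _]; last first.
  by rewrite -echarMn -mulr_natr; congr echar; ring.
case: ifP => [/dvdzP[q ->]|F_ndvd].
  rewrite intrM -[(N%:Z)%:~R]/(N%:R : R) mulfK // echar_int.
  by under eq_bigr do rewrite expr1n; rewrite sumr_const card_ord.
have z_neq1 := @echar_frac_neq1 F N N_gt0 (negbT F_ndvd).
have zN : echar (F%:~R / N%:R) ^+ N = 1.
  by rewrite -echarMn -[X in echar X]mulr_natr mulfVK // echar_int.
have := subrX1 (echar (F%:~R / N%:R)) N; rewrite zN subrr => /esym/eqP.
by rewrite mulf_eq0 subr_eq0 (negbTE z_neq1) => /eqP.
Qed.

End AdditiveCharacter.

Lemma egcdn1 n : (egcdn 1 n).1 = 1%N.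
Proof.
case: egcdnP => // km kn E lt /=; rewrite gcd1n muln1 in E lt.
have kn0 : kn = 0%N by move: lt; clear; case: kn.
by rewrite E kn0.
Qed.

Lemma ep_frac_subz p t (z : rat) (c : int) : prime p -> z * (p ^ t)%:R = c%:~R ->
  exists K : int, ep_frac p z = z + K%:~R.
Proof.
move=> p_prime zE.
have numE : numq z * (p ^ t)%N%:Z = c * denq z.
  apply: (@intr_inj rat); rewrite !intrM numqE -zE -[((p ^ t)%N%:Z)%:~R]/((p ^ t)%:R : rat).
  by rewrite mulrAC.
have den_dvd : (`|denq z| %| p ^ t)%N.
  have := congr1 absz numE; rewrite !abszM /= => absE.
  rewrite -(@Gauss_dvdr _ `|numq z|); last by rewrite coprime_sym coprime_num_den.
  by rewrite absE dvdn_mull.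
have [i _ denE] := dvdn_pfactor _ _ p_prime den_dvd.
have pi_gt0 : (0 < p ^ i)%N by rewrite expn_gt0 prime_gt0.
rewrite /ep_frac /= denE pfactorK // divnn pi_gt0 egcdn1 mulr1.
exists (- (numq z %/ (p ^ i)%N%:Z)%Z).
rewrite -{2}[z]divq_num_den -absz_denq denE {2}(divz_eq (numq z) (p ^ i)%N%:Z).
rewrite intrN !intrD intrM -[((p ^ i)%N%:Z)%:~R]/((p ^ i)%:R : rat).
have : ((p ^ i)%:R : rat) != 0 by rewrite pnatr_eq0 -lt0n.
by move=> pi_neq0; field.
Qed.

Lemma ep_echar (R : realType) p t (z : rat) (c : int) :
  prime p -> z * (p ^ t)%:R = c%:~R -> ep R p z = echar (ratr z).
Proof.
move=> p_prime /(@ep_frac_subz p t z c p_prime)[K zE].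
by rewrite -[ep R p z]/(echar (ratr (ep_frac p z))) zE rmorphD /= ratr_int echar_addz.
Qed.

Lemma ep_pexp_frac (R : realType) p t (a : nat) (G : int) : prime p ->
  ep R p (a%:R / (p ^ t)%:R * G%:~R) = echar (a%:R / (p ^ t)%:R * G%:~R).
Proof.
move=> p_prime; rewrite (@ep_echar R p t _ (a%:Z * G)) //.
  by rewrite rmorphM /= fmorph_div /= !ratr_nat ratr_int.
have pt_neq0 : ((p ^ t)%:R : rat) != 0 by rewrite pnatr_eq0 -lt0n expn_gt0 prime_gt0.
by rewrite intrM; field.
Qed.

Lemma Fval_int m n d1 d2 d3 x1 x2 x3 : m != 2%N ->
  Fval m n d1 d2 d3 x1 x2 x3
  = (4 * (m%:Z - 2) * qform3 (m%:Z - 2) n d1 d2 d3 x1 x2 x3)%:~R.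
Proof.
move=> m_neq2; have m2_neq0 : (m%:R - 2 : rat) != 0 by rewrite subr_eq0 eqr_nat.
rewrite /Fval /Qform /nu_coord /hval /qform3 /qpoly.
by rewrite !(intrD, intrM, intrB, intrN); field.
Qed.

Lemma trunc_density_count (R : realType) p m n d1 d2 d3 t : prime p -> m != 2%N ->
  trunc_density R p m n d1 d2 d3 t
  = (((p ^ (3 * t))%:R : R)^-1 * (p ^ t)%:R
     * (count_dvd3 (p ^ t) (p ^ t)
          (fun x1 x2 x3 => 4 * (m%:Z - 2) * qform3 (m%:Z - 2) n d1 d2 d3 x1 x2 x3))%:R)%:C%C.
Proof.
move=> p_prime m_neq2.
have pt_gt0 : (0 < p ^ t)%N by rewrite expn_gt0 prime_gt0.
rewrite /trunc_density /count_dvd3.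
do 3!(rewrite exchange_big natr_sum mulr_sumr rmorph_sum; apply: eq_bigr => ? _).
under eq_bigr do rewrite Fval_int // ep_pexp_frac //.
rewrite -mulr_sumr sum_echar_frac //.
by case: ifP => _; rewrite /= ?mulr1 ?mulr0 ?rmorph0 ?rmorphM ?rmorph_nat.
Qed.

Lemma pexp_dvdz_4mul p t (A G : int) : prime p -> odd p -> A != 0 ->
  (logn p `|A| <= t)%N ->
  ((p ^ t)%N%:Z %| 4 * A * G)%Z = ((p ^ (t - logn p `|A|))%N%:Z %| G)%Z.
Proof.
move=> p_prime p_odd A_neq0.
have A_gt0 : (0 < `|A|)%N by rewrite absz_gt0.
have [u u_cop] := pfactor_coprime p_prime A_gt0.
set k := logn p `|A| => AE kt.
have cop4 : coprime p 4 by rewrite -[4%N]/(2 ^ 2)%N coprimeXr // coprimen2.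
rewrite !dvdzE !abszM /= AE -{1}(subnKC kt) expnD.
have -> : (4 * (u * p ^ k) * `|G| = p ^ k * (4 * u * `|G|))%N by ring.
by rewrite dvdn_pmul2l ?expn_gt0 ?prime_gt0 // Gauss_dvdr // coprimeXl // coprimeMr cop4.
Qed.

Lemma trunc_density_stable (R : realType) m n d1 d2 d3 p t :
  (3 <= m)%N -> (0 < d1)%N -> (0 < d2)%N -> (0 < d3)%N ->
  prime p -> odd p -> (p %| m - 2)%N ->
  (logn p (m - 2) + minn (logn p d1) (minn (logn p d2) (logn p d3)) <= t)%N ->
  trunc_density R p m n d1 d2 d3 t
  = if (p ^ minn (logn p d1) (minn (logn p d2) (logn p d3)) %| n)%N
    then ((p ^ (logn p (m - 2) + minn (logn p d1) (minn (logn p d2) (logn p d3))))%:R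
          : complex R)
    else 0.
Proof.
set k := logn p (m - 2); set e := minn _ _.
move=> m_ge3 d1_gt0 d2_gt0 d3_gt0 p_prime p_odd p_dvd t_ge.
have AE : m%:Z - 2 = (m - 2)%N by rewrite -subzn //; lia.
have A_neq0 : m%:Z - 2 != 0 by rewrite AE; lia.
have p_dvdA : (p%:Z %| m%:Z - 2)%Z by rewrite AE dvdzE.
have logA : logn p `|m%:Z - 2| = k by rewrite AE.
rewrite trunc_density_count //; last by rewrite neq_ltn m_ge3 orbT.
rewrite (@eq_count_dvd3 _ _ (p ^ (t - k)) _ (qform3 (m%:Z - 2) n d1 d2 d3)) => [|x1 x2 x3].
  rewrite count_qform3 //; [|lia|lia].
  case: ifP => _; last by rewrite mulr0 rmorph0.
  rewrite -(rmorph_nat (real_complex R)) (_ : t - (t - k) + e = k + e)%N; last lia.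
  have pt_neq0 : ((p ^ t)%:R : R) != 0 by rewrite pnatr_eq0 -lt0n expn_gt0 prime_gt0.
  rewrite (_ : 3 * t = t + (t + t))%N; last lia.
  by rewrite !expnD !natrM; congr (_%:C)%C; field.
by rewrite pexp_dvdz_4mul // logA; lia.
Qed.

Theorem lemma3p4 (R : realType) (m n d1 d2 d3 p : nat) :
  (3 <= m)%N -> odd m ->
  (0 < d1)%N -> (0 < d2)%N -> (0 < d3)%N ->
  prime p -> odd p -> (p %| m - 2)%N ->
  @density_is R p m n d1 d2 d3
    (if (p ^ logn p (gcdn (gcdn d1 d2) d3) %| n)%N
     then ((p ^ (logn p (m - 2) + minn (logn p d1) (minn (logn p d2) (logn p d3))))%:R : complex R)
     else 0).
Proof.
move=> m_ge3 _ d1_gt0 d2_gt0 d3_gt0 p_prime p_odd p_dvd.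
rewrite logn_gcd ?gcdn_gt0 ?d1_gt0 // logn_gcd // -minnA.
rewrite /density_is; split; apply: cvg_near_cst;
  exists (logn p (m - 2) + minn (logn p d1) (minn (logn p d2) (logn p d3)))%N => // t /= t_ge;
  by rewrite trunc_density_stable.
Qed.
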